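(* For every $n\ge1$, the reflexive $n$-path graph $I_n$ and the terminal graph $K^1$, regarded as simplicial complexes, are cofibrant in the Thomason model structure on $\mathbf{Cpx}$, and the inclusion $K^1\hookrightarrow I_n$ of the terminal graph as an endpoint of $I_n$ is a Thomason cofibration.
   Context: A simplicial complex consists of a vertex set and a collection of nonempty finite subsets (simplices) containing all singletons and closed under nonempty subsets; maps are vertex functions preserving simplices; $\mathbf{Cpx}$ is the category. Reflexive graphs are the complexes whose simplices have at most two elements. $I_n$ has vertices $0,\dots,n$ and edges $\{i,i+1\}$; $K^1$ is the one-vertex graph. $\mathbf{\Delta}^n$ is the complex on $\{0,\dots,n\}$ with all nonempty subsets simplices, $\mathrm{Sing}(K)_n=\mathbf{Cpx}(\mathbf{\Delta}^n,K)$, $\mathrm{Ex}$ is the right adjoint of barycentric subdivision. Thomason model structure on $\mathbf{Cpx}$: $f$ is a weak equivalence iff $\mathrm{Sing}(f)$ is a weak homotopy equivalence, a fibration iff $\mathrm{Ex}^2\mathrm{Sing}(f)$ is a Kan fibration, and a cofibration iff it has the left lifting property against all trivial fibrations. *)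

From Stdlib Require Import Relations ProofIrrelevance List.
From mathcomp Require Import all_boot.
Set Implicit Arguments.
Unset Strict Implicit.
Unset Printing Implicit Defensive.

Lemma sig_eq (A : Type) (P : A -> Prop) (x y : sig P) :
  proj1_sig x = proj1_sig y -> x = y.
Proof. case: x y => x px [y py] /= E; subst y; f_equal; apply: proof_irrelevance. Qed.

Lemma In_of_mem (T : eqType) (x : T) (s : seq T) : x \in s -> List.In x s.
Proof. elim: s => //= y s IH; rewrite in_cons => /orP [/eqP->|/IH]; auto. Qed.

Record cpx := Cpx {
  vtx : Type;
  simp : (vtx -> Prop) -> Prop;
  simp_fin : forall S, simp S -> exists s : list vtx, forall x, S x -> List.In x s;
  simp_ne : forall S, simp S -> exists x, S x;
  simp_single : forall v, simp (fun x => x = v);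
  simp_sub : forall S T, simp S -> (exists x, T x) -> (forall x, T x -> S x) -> simp T }.

Arguments simp : clear implicits.

Definition img (A B : Type) (f : A -> B) (S : A -> Prop) : B -> Prop :=
  fun y => exists x, S x /\ f x = y.

Definition preserves (K L : cpx) (f : vtx K -> vtx L) : Prop :=
  forall S, simp K S -> simp L (img f S).

Definition hom (K L : cpx) := {f : vtx K -> vtx L | preserves f}.

Lemma comp_pres (K L M : cpx) (f : hom K L) (g : hom L M) :
  preserves (fun x => proj1_sig g (proj1_sig f x)).
Proof.
move=> S HS; have HfS := proj2_sig f _ HS; have HgS := proj2_sig g _ HfS.
apply: (simp_sub HgS).
  by case: (simp_ne HS) => x Sx; exists (proj1_sig g (proj1_sig f x)); exists x.
move=> y [x [Sx <-]]; exists (proj1_sig f x); split=> //; by exists x.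
Qed.

Definition hom_comp (K L M : cpx) (f : hom K L) (g : hom L M) : hom K M :=
  exist _ (fun x => proj1_sig g (proj1_sig f x)) (comp_pres f g).

Definition Delta (n : nat) : cpx.
Proof.
refine (@Cpx 'I_n.+1 (fun S => exists x, S x) _ _ _ _).
- move=> S _; exists (enum 'I_n.+1) => x _; apply: In_of_mem; by rewrite mem_enum.
- by [].
- by move=> v; exists v.
- by [].
Defined.

Definition In_simp (n : nat) (S : 'I_n.+1 -> Prop) : Prop :=
  (exists x, S x) /\
  forall x y : 'I_n.+1, S x -> S y ->
    [|| x == y, (x.+1 == y :> nat) | (y.+1 == x :> nat)].

Definition In (n : nat) : cpx.
Proof.
refine (@Cpx 'I_n.+1 (@In_simp n) _ _ _ _).
- move=> S _; exists (enum 'I_n.+1) => x _; apply: In_of_mem; by rewrite mem_enum.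
- by move=> S [].
- move=> v; split; first by exists v.
  by move=> x y -> ->; rewrite eqxx.
- move=> S T [_ HS] HT sub; split=> // x y Tx Ty; exact: HS (sub _ Tx) (sub _ Ty).
Defined.

Definition K1 : cpx.
Proof.
refine (@Cpx unit (fun S => exists x, S x) _ _ _ _).
- move=> S _; exists [:: tt] => -[] _; by left.
- by [].
- by move=> v; exists v.
- by [].
Defined.

Definition Empty : cpx.
Proof.
refine (@Cpx void (fun _ => False) _ _ _ _) => //; by case.
Defined.

Definition from_empty_fun (K : cpx) : vtx Empty -> vtx K := fun v => match v with end.
Lemma from_empty_pres (K : cpx) : preserves (from_empty_fun K).
Proof. by []. Qed.
Definition from_empty (K : cpx) : hom Empty K := exist _ (from_empty_fun K) (@from_empty_pres K).

Lemma endpt_pres (n : nat) (e : 'I_n.+1) : preserves (K := K1) (L := In n) (fun _ => e).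
Proof.
move=> S [x Sx]; split; first by exists e; exists x.
by move=> y z [? [_ <-]] [? [_ <-]]; rewrite eqxx.
Qed.
Definition endpt (n : nat) (e : 'I_n.+1) : hom K1 (In n) := exist _ (fun _ => e) (endpt_pres e).

Definition mono (m n : nat) :=
  {t : {ffun 'I_m.+1 -> 'I_n.+1} | [forall i : 'I_m.+1, forall j : 'I_m.+1, (i <= j) ==> (t i <= t j)]}.

Lemma mono_comp_prop m k n (s : mono m k) (t : mono k n) :
  [forall i : 'I_m.+1, forall j : 'I_m.+1, (i <= j) ==>
     ([ffun x => proj1_sig t (proj1_sig s x)] i <= [ffun x => proj1_sig t (proj1_sig s x)] j)].
Proof.
apply/forallP => i; apply/forallP => j; apply/implyP => ij; rewrite !ffunE.
have /forallP/(_ (proj1_sig s i))/forallP/(_ (proj1_sig s j))/implyP := proj2_sig t; apply.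
by have /forallP/(_ i)/forallP/(_ j)/implyP := proj2_sig s; apply.
Qed.

Definition mono_comp m k n (s : mono m k) (t : mono k n) : mono m n :=
  exist _ [ffun x => proj1_sig t (proj1_sig s x)] (mono_comp_prop s t).

Lemma mono_pres m n (t : mono m n) :
  preserves (K := Delta m) (L := Delta n) (fun i => proj1_sig t i).
Proof. move=> S [x Sx]; by exists (proj1_sig t x); exists x. Qed.
Definition mono_hom m n (t : mono m n) : hom (Delta m) (Delta n) := exist _ (fun i => proj1_sig t i) (mono_pres t).

Lemma const_mono_prop n (c : 'I_2) :
  [forall i : 'I_n.+1, forall j : 'I_n.+1, (i <= j) ==> ([ffun _ : 'I_n.+1 => c] i <= [ffun _ : 'I_n.+1 => c] j)].
Proof. apply/forallP => i; apply/forallP => j; by rewrite !ffunE leqnn implybT. Qed.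
Definition c0 n : mono n 1 := exist _ [ffun _ : 'I_n.+1 => ord0] (const_mono_prop n ord0).
Definition c1 n : mono n 1 := exist _ [ffun _ : 'I_n.+1 => ord_max] (const_mono_prop n ord_max).

Unset Implicit Arguments.
Record sdata := SData {
  sobj : nat -> Type;
  sact : forall m n, mono m n -> sobj n -> sobj m }.
Arguments sact s {m n} _ _.

Record smap (X Y : sdata) := SMap {
  smfun :> forall n, sobj X n -> sobj Y n;
  smnat : forall m n (t : mono m n) x, smfun m (sact X t x) = sact Y t (smfun n x) }.
Arguments smfun {X Y} _ _ _.
Arguments smnat {X Y} _ _ _ _ _.
Arguments SMap {X Y} _ _.
Set Implicit Arguments.

Definition smap_comp (X Y Z : sdata) (f : smap X Y) (g : smap Y Z) : smap X Z.
Proof.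
refine (@SMap X Z (fun n x => g n (f n x)) _).
by move=> m n t x; rewrite smnat smnat.
Defined.

Definition lawful (X : sdata) : Prop :=
  (forall n (i : mono n n), (forall j, proj1_sig i j = j) ->
     forall x, sact X i x = x) /\
  (forall m k n (s : mono m k) (t : mono k n) (r : mono m n),
     (forall j, proj1_sig r j = proj1_sig t (proj1_sig s j)) ->
     forall x, sact X r x = sact X s (sact X t x)).

Record sset := SSet { ssd :> sdata; ssd_law : lawful ssd }.

Definition stdsimp (n : nat) : sdata :=
  @SData (fun m => mono m n) (fun m k s t => mono_comp s t).

Definition horn_pred n (k : 'I_n.+1) m (t : mono m n) : Prop :=
  [exists i, (i != k) && [forall j, proj1_sig t j != i]].

Lemma horn_act_prop n (k : 'I_n.+1) m m' (s : mono m' m) (t : mono m n) :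
  horn_pred k t -> horn_pred k (mono_comp s t).
Proof.
move=> /existsP [i /andP [ik /forallP H]]; apply/existsP; exists i.
rewrite ik /=; apply/forallP => j /=; by rewrite ffunE H.
Qed.

Definition horn (n : nat) (k : 'I_n.+1) : sdata :=
  @SData (fun m => {t : mono m n | horn_pred k t})
         (fun m' m s x => exist _ (mono_comp s (proj1_sig x)) (horn_act_prop s (proj2_sig x))).

Definition hincl n (k : 'I_n.+1) : smap (horn k) (stdsimp n) :=
  @SMap (horn k) (stdsimp n) (fun m x => proj1_sig x) (fun _ _ _ _ => erefl).

Definition kan_fibration (E B : sdata) (p : smap E B) : Prop :=
  forall n (k : 'I_n.+1), 0 < n ->
  forall (a : smap (horn k) E) (b : smap (stdsimp n) B),
    (forall m x, p m (a m x) = b m (hincl k m x)) ->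
    exists h : smap (stdsimp n) E,
      (forall m x, h m (hincl k m x) = a m x) /\ (forall m x, p m (h m x) = b m x).

Definition sterm : sdata := @SData (fun _ => unit) (fun _ _ _ _ => tt).
Definition to_term (X : sdata) : smap X sterm :=
  @SMap X sterm (fun _ _ => tt) (fun _ _ _ _ => erefl).
Definition kan_complex (X : sdata) : Prop := kan_fibration (to_term X).

Definition prodI (Y : sdata) : sdata :=
  @SData (fun n => (sobj Y n * mono n 1)%type)
         (fun m n t yu => (sact Y t yu.1, mono_comp t yu.2)).

Definition homotopic (Y Z : sdata) (g h : smap Y Z) : Prop :=
  exists H : smap (prodI Y) Z,
    (forall n y, H n (y, c0 n) = g n y) /\ (forall n y, H n (y, c1 n) = h n y).

(* same connected component of the mapping space Fun(Y,Z) *)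
Definition htpc (Y Z : sdata) : relation (smap Y Z) :=
  clos_refl_sym_trans (smap Y Z) (@homotopic Y Z).

(* weak homotopy equivalence (Kerodon Def. 3.2.4.1): for every Kan complex Z,
   pi_0 Fun(Y,Z) -> pi_0 Fun(X,Z) is bijective *)
Definition weq (X Y : sdata) (f : smap X Y) : Prop :=
  forall Z : sset, kan_complex Z ->
    (forall g' : smap X Z, exists g : smap Y Z, htpc (smap_comp f g) g') /\
    (forall g1 g2 : smap Y Z, htpc (smap_comp f g1) (smap_comp f g2) -> htpc g1 g2).

Definition Sing (K : cpx) : sdata :=
  @SData (fun n => hom (Delta n) K) (fun m n t g => hom_comp (mono_hom t) g).

Definition Sing_map (K L : cpx) (f : hom K L) : smap (Sing K) (Sing L).
Proof.
refine (@SMap (Sing K) (Sing L) (fun n g => hom_comp g f) _).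
by move=> m n t x; apply: sig_eq.
Defined.

(* m-simplices of sd Delta[n] = nerve of the poset of nonempty subsets of [n] *)
Definition chain (n m : nat) :=
  {c : {ffun 'I_m.+1 -> {set 'I_n.+1}} |
     [forall i, c i != set0] && [forall i : 'I_m.+1, forall j : 'I_m.+1, (i <= j) ==> (c i \subset c j)]}.

Lemma push_prop n' n m (t : mono n' n) (c : chain n' m) :
  let d := [ffun i => (fun x => proj1_sig t x) @: proj1_sig c i] in
  [forall i, d i != set0] && [forall i : 'I_m.+1, forall j : 'I_m.+1, (i <= j) ==> (d i \subset d j)].
Proof.
case: c => c /andP [/forallP ne /forallP mo] /=; apply/andP; split.
  by apply/forallP => i; rewrite ffunE imset_eq0 ne.
apply/forallP => i; apply/forallP => j; apply/implyP => ij; rewrite !ffunE.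
by apply: imsetS; move: (mo i) => /forallP/(_ j)/implyP; apply.
Qed.

(* image of a chain along t : [n'] -> [n], i.e. sd(t) *)
Definition push n' n m (t : mono n' n) (c : chain n' m) : chain n m :=
  exist _ [ffun i => (fun x => proj1_sig t x) @: proj1_sig c i] (push_prop t c).

(* a simplicial map sd Delta[n] -> X, given by its values on all simplices *)
Definition exnat (X : sdata) (n : nat) (phi : forall m, chain n m -> sobj X m) : Prop :=
  forall k m (t : mono m k) (c : chain n k) (c' : chain n m),
    (forall i, proj1_sig c' i = proj1_sig c (proj1_sig t i)) ->
    phi m c' = sact X t (phi k c).

Lemma Ex_act_prop (X : sdata) n' n (t : mono n' n)
  (phi : {phi : forall m, chain n m -> sobj X m | exnat phi}) :
  exnat (fun m c => proj1_sig phi m (push t c)).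
Proof.
move=> k m s c c' E; apply: (proj2_sig phi) => i /=; by rewrite !ffunE E.
Qed.

Definition Ex (X : sdata) : sdata :=
  @SData (fun n => {phi : forall m, chain n m -> sobj X m | exnat phi})
         (fun n' n t phi => exist _ (fun m c => proj1_sig phi m (push t c)) (Ex_act_prop t phi)).

Lemma Ex_map_prop (X Y : sdata) (f : smap X Y) n
  (phi : {phi : forall m, chain n m -> sobj X m | exnat phi}) :
  exnat (X := Y) (fun m c => f m (proj1_sig phi m c)).
Proof. move=> k m t c c' E; by rewrite (proj2_sig phi _ _ t c c' E) smnat. Qed.

Definition Ex_map (X Y : sdata) (f : smap X Y) : smap (Ex X) (Ex Y).
Proof.
refine (@SMap (Ex X) (Ex Y) (fun n phi => exist _ (fun m c => f m (proj1_sig phi m c)) (Ex_map_prop f phi)) _).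
by move=> m n t x; apply: sig_eq.
Defined.

Definition cpx_weq (K L : cpx) (f : hom K L) : Prop := weq (Sing_map f).
Definition cpx_fib (K L : cpx) (f : hom K L) : Prop :=
  kan_fibration (Ex_map (Ex_map (Sing_map f))).
Definition cpx_trivfib (K L : cpx) (f : hom K L) : Prop := cpx_fib f /\ cpx_weq f.

Definition llp (A B X Y : cpx) (i : hom A B) (p : hom X Y) : Prop :=
  forall (u : hom A X) (v : hom B Y),
    (forall a, proj1_sig p (proj1_sig u a) = proj1_sig v (proj1_sig i a)) ->
    exists h : hom B X,
      (forall a, proj1_sig h (proj1_sig i a) = proj1_sig u a) /\
      (forall b, proj1_sig p (proj1_sig h b) = proj1_sig v b).

Definition cofibration (A B : cpx) (i : hom A B) : Prop :=
  forall (X Y : cpx) (p : hom X Y), cpx_trivfib p -> llp i p.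

Definition cofibrant (K : cpx) : Prop := cofibration (from_empty K).

From mathcomp Require Import all_boot zify.
From Stdlib Require Import FunctionalExtensionality ProofIrrelevance PropExtensionality.
From Stdlib Require Import Classical Relations.
Set Implicit Arguments. Unset Strict Implicit. Unset Printing Implicit Defensive.

(* A Thomason fibration [p : X -> Y] lifts edges: lifting the horn
   [Lambda^1_0 -> Delta^1] against [Ex^2 Sing p], for the map of
   [sd^2 Delta^1] collapsing onto an edge [p x -- y], produces an edge
   [x -- a] of [X] with [p a = y].  Iterating along [I_n] lifts paths from a
   prescribed lift of an endpoint, which is the lifting property of an
   endpoint [K^1 -> I_n].  A trivial fibration is moreover surjective on
   vertices: by edge lifting, "[s] starts in the image of [p]" is a map from
   [Sing Y] to the constant Kan complex of propositions, and after
   precomposition with the weak equivalence [Sing p] it becomes the constant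
   [True]; so it is homotopic to [True] and holds at every vertex.
   Surjectivity handles [0 -> K^1], and together with path lifting
   [0 -> I_n]. *)

Lemma smap_ext (X Y : sdata) (f g : smap X Y) : (forall n x, f n x = g n x) -> f = g.
Proof.
case: f g => f Hf [g Hg] /= E.
have {}E : f = g.
  by apply: functional_extensionality_dep => n; apply: functional_extensionality.
by subst g; f_equal; apply: proof_irrelevance.
Qed.

Lemma mono_eq m n (s t : mono m n) : proj1_sig s =1 proj1_sig t -> s = t.
Proof. by move=> E; apply: sig_eq; apply/ffunP. Qed.

Lemma const_mono_homo m n (c : 'I_n.+1) :
  [forall i : 'I_m.+1, forall j : 'I_m.+1,
     (i <= j) ==> ([ffun _ : 'I_m.+1 => c] i <= [ffun _ : 'I_m.+1 => c] j)].
Proof. by apply/forallP => i; apply/forallP => j; rewrite !ffunE leqnn implybT. Qed.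

Definition const_mono m n (c : 'I_n.+1) : mono m n :=
  exist _ [ffun _ => c] (const_mono_homo m c).

Lemma id_mono_homo n :
  [forall i : 'I_n.+1, forall j : 'I_n.+1, (i <= j) ==> ([ffun i => i] i <= [ffun i => i] j)].
Proof. by apply/forallP => i; apply/forallP => j; rewrite !ffunE; apply/implyP. Qed.

Definition id_mono n : mono n n := exist _ [ffun i => i] (id_mono_homo n).

Lemma edge_mono_homo n (u w : 'I_n.+1) : u <= w ->
  [forall i : 'I_2, forall j : 'I_2, (i <= j) ==>
     ([ffun i : 'I_2 => if i == ord0 then u else w] i
        <= [ffun i : 'I_2 => if i == ord0 then u else w] j)].
Proof.
move=> uw; apply/forallP => i; apply/forallP => j; apply/implyP => ij; rewrite !ffunE.
case: (i =P ord0) => [_|/eqP i0]; case: (j =P ord0) => [j0|_] //.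
by move: ij i0; rewrite j0 -!(inj_eq val_inj) leqn0 => ->.
Qed.

Definition edge_mono n (u w : 'I_n.+1) (uw : u <= w) : mono 1 n :=
  exist _ [ffun i : 'I_2 => if i == ord0 then u else w] (edge_mono_homo uw).

Definition const_sdata (T : Type) : sdata := @SData (fun _ => T) (fun _ _ _ x => x).

Lemma const_lawful (T : Type) : lawful (const_sdata T).
Proof. by []. Qed.

Definition const_sset (T : Type) : sset := SSet (const_lawful T).

Lemma const_smap_vertex (X : sdata) (T : Type) (a : smap X (const_sdata T)) m x :
  a m x = a 0 (sact X (const_mono 0 ord0) x).
Proof. by rewrite (smnat a). Qed.

Section HornConnected.
Variables (n : nat) (k : 'I_n.+1) (T : Type) (a : smap (horn k) (const_sdata T)).

Definition horn_vertex (v : sobj (horn k) 0) : 'I_n.+1 := proj1_sig (proj1_sig v) ord0.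

(* Vertices [v1 <= v2] both different from some [i0 != k] span an edge of the
   horn, namely one lying in the face opposite to [i0]. *)
Lemma horn_vertex_conn (i0 : 'I_n.+1) (v1 v2 : sobj (horn k) 0) :
  i0 != k -> horn_vertex v1 <= horn_vertex v2 ->
  horn_vertex v1 != i0 -> horn_vertex v2 != i0 -> a 0 v1 = a 0 v2.
Proof.
move=> i0k le12 n1 n2.
have e_horn : horn_pred k (edge_mono le12).
  apply/existsP; exists i0; rewrite i0k /=; apply/forallP => j; rewrite ffunE.
  by case: (j == ord0).
pose e : sobj (horn k) 1 := exist _ _ e_horn.
have -> : v1 = sact (horn k) (c0 0) e.
  by apply: sig_eq; apply: mono_eq => j; rewrite /= !ffunE (ord1 j).
have -> : v2 = sact (horn k) (c1 0) e.
  by apply: sig_eq; apply: mono_eq => j; rewrite /= !ffunE (ord1 j).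
by rewrite !(smnat a).
Qed.

Lemma horn_vertex_conn_k (v : sobj (horn k) 0) (kk : horn_pred k (const_mono 0 k)) :
  a 0 v = a 0 (exist _ _ kk).
Proof.
have /existsP [i0 /andP [i0k /forallP v_i0]] := proj2_sig v.
have k_i0 : horn_vertex (exist _ _ kk) != i0 by rewrite /horn_vertex /= ffunE eq_sym.
have [vk|kv] := leqP (horn_vertex v) k.
  by apply: (horn_vertex_conn i0k) (v_i0 ord0) k_i0; rewrite /horn_vertex /= ffunE.
by symmetry; apply: (horn_vertex_conn i0k) k_i0 (v_i0 ord0); rewrite /horn_vertex /= ffunE ltnW.
Qed.

End HornConnected.

Lemma const_horn_pred n (k : 'I_n.+1) : 0 < n -> horn_pred k (const_mono 0 k).
Proof.
move=> n_gt0; apply/existsP.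
have [-> | k0] := eqVneq k ord0; last first.
  by exists ord0; rewrite eq_sym k0 /=; apply/forallP => j; rewrite ffunE.
exists ord_max; rewrite -(inj_eq val_inj) /= -lt0n n_gt0 /=.
by apply/forallP => j; rewrite ffunE -(inj_eq val_inj) /= eq_sym -lt0n n_gt0.
Qed.

(* A horn is connected, so a map from it to a constant simplicial set is
   constant and extends constantly over the simplex. *)
Lemma const_kan (T : Type) : kan_complex (const_sset T).
Proof.
move=> n k n_gt0 a b _.
have kk := const_horn_pred k n_gt0.
exists (@SMap (stdsimp n) (const_sdata T) (fun _ _ => a 0 (exist _ _ kk)) (fun _ _ _ _ => erefl)).
split=> [m x|m x]; last by case: (b m x).
by rewrite [RHS](const_smap_vertex a) (horn_vertex_conn_k a (sact _ _ x)).
Qed.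

Lemma htpc_const_vertex (Y : sset) (T : Type) (g1 g2 : smap Y (const_sdata T)) :
  htpc g1 g2 -> forall y, g1 0 y = g2 0 y.
Proof.
elim=> [g h [H [H0 H1]]|g|g h _ IH|g h k _ IH1 _ IH2] y //; last by rewrite IH1 IH2.
pose cyl : sobj (prodI Y) 1 := (sact Y (const_mono 1 ord0) y, id_mono 1).
have face_cyl (c : mono 0 1) : sact (prodI Y) c cyl = (y, c).
  congr pair; last by apply: mono_eq => i; rewrite !ffunE.
  rewrite -((ssd_law Y).2 _ _ _ c _ (id_mono 0)) => [|i]; last by rewrite !ffunE (ord1 i).
  by apply: (ssd_law Y).1 => i; rewrite ffunE.
by rewrite -H0 -H1 -!face_cyl !(smnat H).
Qed.

Lemma Sing_lawful (K : cpx) : lawful (Sing K).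
Proof.
split=> [n i id_i g | m k n s t r rE g]; apply: sig_eq; apply: functional_extensionality => j /=.
  by rewrite id_i.
by rewrite rE.
Qed.

Definition Sing_sset (K : cpx) : sset := SSet (Sing_lawful K).

Definition chain_union m m' m'' (c : chain m m') (d : chain m' m'') (j : 'I_m''.+1) :
  {set 'I_m.+1} := \bigcup_(i in proj1_sig d j) proj1_sig c i.

Definition simp_image (K : cpx) (A : Type) (f : A -> vtx K) : Prop :=
  simp K (fun y => exists a, f a = y).

Lemma simp_image_comp (K : cpx) (A B : Type) (f : A -> vtx K) (g : B -> A) (b : B) :
  simp_image f -> simp_image (fun x => f (g x)).
Proof.
move=> Hf; apply: (simp_sub Hf); first by exists (f (g b)); exists b.
by move=> y [x <-]; exists (g x).
Qed.

Lemma simp_image_map (K L : cpx) (p : hom K L) (A : Type) (f : A -> vtx K) (a : A) :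
  simp_image f -> simp_image (fun x => proj1_sig p (f x)).
Proof.
move=> /(proj2_sig p) Hf; apply: (simp_sub Hf); first by exists (proj1_sig p (f a)); exists a.
by move=> y [x <-]; exists (f x); split=> //; exists x.
Qed.

Section Ex2Simplex.
Variables (K : cpx) (m : nat) (f : {set 'I_m.+1} -> vtx K).
Hypothesis f_simp : simp_image f.

Lemma ex2_flag_pres m' m'' (c : chain m m') (d : chain m' m'') :
  preserves (K := Delta m'') (L := K) (fun j => f (chain_union c d j)).
Proof.
move=> S HS; apply: (simp_sub f_simp).
  by case: (simp_ne HS) => j Sj; exists (f (chain_union c d j)); exists j.
by move=> y [j [_ <-]]; exists (chain_union c d j).
Qed.

Lemma ex2_inner_nat m' (c : chain m m') :
  exnat (X := Sing K) (fun m'' d => exist _ _ (ex2_flag_pres c d)).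
Proof.
move=> k m2 t d d' E; apply: sig_eq; apply: functional_extensionality => j /=.
by rewrite /chain_union E.
Qed.

Lemma ex2_outer_nat :
  exnat (X := Ex (Sing K)) (fun m' c => exist _ _ (ex2_inner_nat c)).
Proof.
move=> k m2 t c c' E; apply: sig_eq; apply: functional_extensionality_dep => m''.
apply: functional_extensionality => d; apply: sig_eq.
apply: functional_extensionality => j /=; congr f; rewrite /chain_union.
apply/setP => x; apply/bigcupP/bigcupP => [[i Hi Hx]|[i Hi Hx]].
  by exists (proj1_sig t i); [rewrite ffunE imset_f | rewrite -E].
rewrite ffunE in Hi; case/imsetP: Hi => i' Hi' Ei.
by exists i' => //; rewrite E -Ei.
Qed.

(* The [m]-simplex of [Ex^2 Sing K] given by the last-vertex map
   [sd^2 Delta[m] -> sd Delta[m]] (a chain of chains goes to its union)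
   followed by [f] on the vertices of [sd Delta[m]]. *)
Definition ex2_simplex : sobj (Ex (Ex (Sing K))) m := exist _ _ ex2_outer_nat.

End Ex2Simplex.

Definition ex2_eval (K : cpx) m (x : sobj (Ex (Ex (Sing K))) m) m' m''
  (c : chain m m') (d : chain m' m'') : hom (Delta m'') K :=
  proj1_sig (proj1_sig x m' c) m'' d.

Lemma ex2_simplex_ext (K : cpx) m f g f_simp g_simp :
  f =1 g -> @ex2_simplex K m f f_simp = @ex2_simplex K m g g_simp.
Proof.
move=> /functional_extensionality E; subst g.
by f_equal; apply: proof_irrelevance.
Qed.

Lemma ex2_simplex_sact (K : cpx) m n (s : mono m n) f f_simp f_simp' :
  sact (Ex (Ex (Sing K))) s (@ex2_simplex K n f f_simp)
  = @ex2_simplex K m (fun U => f ((fun x => proj1_sig s x) @: U)) f_simp'.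
Proof.
apply: sig_eq; apply: functional_extensionality_dep => m'.
apply: functional_extensionality => c; apply: sig_eq.
apply: functional_extensionality_dep => m''; apply: functional_extensionality => d.
apply: sig_eq; apply: functional_extensionality => j /=; congr f; rewrite /chain_union.
apply/setP => x; apply/bigcupP/imsetP => [[i Hi]|[y /bigcupP[i Hi Hy] ->]].
  by rewrite ffunE => /imsetP [y Hy ->]; exists y => //; apply/bigcupP; exists i.
by exists i => //; rewrite ffunE; apply: imset_f.
Qed.

Lemma ex2_simplex_map (X Y : cpx) (p : hom X Y) m f f_simp pf_simp :
  Ex_map (Ex_map (Sing_map p)) m (@ex2_simplex X m f f_simp)
  = @ex2_simplex Y m (fun U => proj1_sig p (f U)) pf_simp.
Proof.
apply: sig_eq; apply: functional_extensionality_dep => m'.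
apply: functional_extensionality => c; apply: sig_eq.
apply: functional_extensionality_dep => m''; apply: functional_extensionality => d.
exact: sig_eq.
Qed.

Definition edge (K : cpx) (a b : vtx K) : Prop := simp K (fun z => z = a \/ z = b).

Lemma edge_sym (K : cpx) (a b : vtx K) : edge a b -> edge b a.
Proof.
move=> ab; apply: (simp_sub ab); first by exists a; right.
by move=> z [->|->]; [right|left].
Qed.

Lemma hom_edge (K L : cpx) (g : hom K L) (a b : vtx K) :
  edge a b -> edge (proj1_sig g a) (proj1_sig g b).
Proof.
move=> /(proj2_sig g) gab; apply: (simp_sub gab); first by exists (proj1_sig g a); left.
by move=> y [->|->]; [exists a | exists b]; split; auto.
Qed.

Lemma Delta_edge m (i j : 'I_m.+1) : edge (i : vtx (Delta m)) j.
Proof. by exists i; left. Qed.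

Lemma chain_pt_prop :
  [forall i, [ffun _ : 'I_1 => [set: 'I_1]] i != set0] &&
  [forall i : 'I_1, forall j : 'I_1, (i <= j) ==>
     ([ffun _ : 'I_1 => [set: 'I_1]] i \subset [ffun _ : 'I_1 => [set: 'I_1]] j)].
Proof.
apply/andP; split; apply/forallP => i; rewrite ?ffunE; first by apply/set0Pn; exists ord0.
by apply/forallP => j; rewrite !ffunE subxx implybT.
Qed.

Definition chain_pt : chain 0 0 := exist _ [ffun _ : 'I_1 => [set: 'I_1]] chain_pt_prop.

Definition chain_01_fun : {ffun 'I_2 -> {set 'I_2}} :=
  [ffun i : 'I_2 => if i == ord0 then [set ord0] else setT].

Lemma chain_01_prop :
  [forall i, chain_01_fun i != set0] &&
  [forall i : 'I_2, forall j : 'I_2, (i <= j) ==> (chain_01_fun i \subset chain_01_fun j)].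
Proof.
apply/andP; split; apply/forallP => i; rewrite ?ffunE.
  by case: (i == ord0); apply/set0Pn; exists ord0; rewrite ?inE.
apply/forallP => j; rewrite !ffunE; apply/implyP => ij.
case: (i =P ord0) => [_|/eqP i0]; case: (j =P ord0) => [j0|_] //; rewrite ?subsetT //.
by move: ij i0; rewrite j0 -!(inj_eq val_inj) leqn0 => ->.
Qed.

Definition chain_01 : chain 1 1 := exist _ chain_01_fun chain_01_prop.

Lemma chain_01_face0 (i : 'I_1) :
  proj1_sig (push (c0 0) chain_pt) i = proj1_sig chain_01 (proj1_sig (c0 0) i).
Proof.
rewrite /= !ffunE /=; apply/setP => y.
apply/imsetP/set1P => [[z _ ->]|->]; first by rewrite ffunE.
by exists ord0; rewrite ?ffunE ?inE.
Qed.

Lemma ex2_eval_01_vertex0 (K : cpx) (x : sobj (Ex (Ex (Sing K))) 1) :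
  proj1_sig (ex2_eval x chain_01 chain_01) ord0
  = proj1_sig (ex2_eval (sact _ (c0 0) x) chain_pt chain_pt) ord0.
Proof.
rewrite /ex2_eval /= (proj2_sig x 1 0 (c0 0) _ _ chain_01_face0) /=.
by rewrite (proj2_sig (proj1_sig x 1 chain_01) 1 0 (c0 0) _ _ chain_01_face0) /= ffunE.
Qed.

Section FibEdgeLift.
Variables (X Y : cpx) (p : hom X Y) (x : vtx X) (y1 : vtx Y).
Hypothesis x_y1 : edge (proj1_sig p x) y1.

Lemma const_simp_image (A : Type) (a : A) : simp_image (fun _ : A => x).
Proof.
apply: (simp_sub (simp_single x)); first by exists x; exists a.
by move=> z [? <-].
Qed.

(* The vertex map [sd Delta[1] -> Y] sending [{0}] to [p x] and the other
   subsets to [y1], precomposed with [sd t]. *)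
Definition edge_over m (t : mono m 1) (U : {set 'I_m.+1}) : vtx Y :=
  if [exists l in U, proj1_sig t l != ord0] then y1 else proj1_sig p x.

Lemma edge_over_simp m (t : mono m 1) : simp_image (edge_over t).
Proof.
apply: (simp_sub x_y1); first by exists (edge_over t set0); exists set0.
by move=> y [U <-]; rewrite /edge_over; case: ifP; [right|left].
Qed.

Lemma edge_lift_horn_nat m n (s : mono m n) (v : sobj (horn (ord0 : 'I_2)) n) :
  ex2_simplex (const_simp_image set0)
  = sact (Ex (Ex (Sing X))) s (ex2_simplex (const_simp_image set0)).
Proof. exact/esym/ex2_simplex_sact. Qed.

Definition edge_lift_horn : smap (horn (ord0 : 'I_2)) (Ex (Ex (Sing X))) :=
  @SMap (horn ord0) (Ex (Ex (Sing X))) (fun m _ => ex2_simplex (const_simp_image set0))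
    edge_lift_horn_nat.

Lemma edge_lift_simplex_nat m n (s : mono m n) (t : mono n 1) :
  ex2_simplex (edge_over_simp (mono_comp s t))
  = sact (Ex (Ex (Sing Y))) s (ex2_simplex (edge_over_simp t)).
Proof.
rewrite (ex2_simplex_sact _ (simp_image_comp _ set0 (edge_over_simp t))).
apply: ex2_simplex_ext => U; rewrite /edge_over; congr (if _ then _ else _).
apply/existsP/existsP => [[l /andP [lU tl]]|[l /andP [/imsetP [l' l'U ->] tl]]].
  by exists (proj1_sig s l); rewrite imset_f //=; rewrite ffunE in tl.
by exists l'; rewrite l'U /= ffunE.
Qed.

Definition edge_lift_simplex : smap (stdsimp 1) (Ex (Ex (Sing Y))) :=
  @SMap (stdsimp 1) (Ex (Ex (Sing Y))) (fun m t => ex2_simplex (edge_over_simp t))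
    edge_lift_simplex_nat.

Lemma edge_lift_compat m (v : sobj (horn (ord0 : 'I_2)) m) :
  Ex_map (Ex_map (Sing_map p)) m (edge_lift_horn m v)
  = edge_lift_simplex m (hincl ord0 m v).
Proof.
case: v => t t_horn.
transitivity (ex2_simplex (simp_image_map p set0 (const_simp_image (set0 : {set 'I_m.+1}))));
  first exact: ex2_simplex_map.
apply: ex2_simplex_ext => U; rewrite /edge_over /=; case: existsP => // -[l /andP [_ tl]].
case/existsP: t_horn => i /andP [i0 /forallP /(_ l)].
move: tl i0; rewrite -!(inj_eq val_inj) /=.
by case: (proj1_sig t l) => [[|[|?]] ?]; case: i => [[|[|?]] ?].
Qed.

(* The filler of [Lambda^1_0 -> Delta^1], evaluated at the flag [{0} < {0,1}]
   at both levels of [Ex^2], is a [1]-simplex of [X] from [x] to a lift of [y1]. *)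
Lemma fib_edge_lift : cpx_fib p -> exists a, proj1_sig p a = y1 /\ edge x a.
Proof.
move=> p_fib.
have [h [h_horn h_over]] := p_fib 1 ord0 (erefl _) _ _ edge_lift_compat.
pose e := ex2_eval (h 1 (id_mono 1)) chain_01 chain_01.
have e0 : proj1_sig e ord0 = x.
  have v_horn : horn_pred (ord0 : 'I_2) (c0 0).
    by apply/existsP; exists ord_max; apply/andP; split=> //; apply/forallP => j; rewrite ffunE.
  have h_v : h 0 (c0 0) = edge_lift_horn 0 (exist _ _ v_horn) := h_horn 0 (exist _ _ v_horn).
  have c0_id : mono_comp (c0 0) (id_mono 1) = c0 0 by apply: mono_eq => i; rewrite !ffunE.
  by rewrite /e ex2_eval_01_vertex0 -(smnat h) /= c0_id h_v.
have e1 : proj1_sig p (proj1_sig e ord_max) = y1.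
  have := congr1 (fun z => proj1_sig (ex2_eval z chain_01 chain_01) ord_max) (h_over 1 (id_mono 1)).
  rewrite /= => ->; rewrite /edge_over; case: existsP => // -[]; exists ord_max.
  rewrite ffunE /= andbT; apply/bigcupP; exists ord_max; by rewrite ffunE ?inE.
exists (proj1_sig e ord_max); split=> //.
by rewrite -[x in edge x]e0; apply: hom_edge; apply: Delta_edge.
Qed.

End FibEdgeLift.

Lemma const_pres (K L : cpx) (y : vtx L) : preserves (K := K) (fun _ => y).
Proof.
move=> S /simp_ne [i Si]; apply: (simp_sub (simp_single y)); first by exists y; exists i.
by move=> z [j [_ <-]].
Qed.

Definition const_hom (K L : cpx) (y : vtx L) : hom K L := exist _ _ (@const_pres K L y).

Section FibWeqSurj.
Variables (X Y : cpx) (p : hom X Y).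
Hypothesis p_fib : cpx_fib p.

Definition in_image n (s : sobj (Sing Y) n) : Prop :=
  exists x, proj1_sig p x = proj1_sig s ord0.

Lemma in_image_sact m n (t : mono m n) (s : sobj (Sing Y) n) :
  in_image (sact (Sing Y) t s) = in_image s.
Proof.
have s_edge := hom_edge s (Delta_edge (proj1_sig t ord0) ord0).
apply: propositional_extensionality; split=> -[x px].
  by have [a [pa _]] := fib_edge_lift (eq_ind_r (fun y => edge y _) s_edge px) p_fib; exists a.
rewrite /= in px; have s_edge' := edge_sym s_edge; rewrite -px in s_edge'.
by have [a [pa _]] := fib_edge_lift s_edge' p_fib; exists a.
Qed.

Definition in_image_smap : smap (Sing Y) (const_sdata Prop) :=
  @SMap (Sing Y) (const_sdata Prop) in_image in_image_sact.

Lemma weq_fib_surj : cpx_weq p -> forall y, exists x, proj1_sig p x = y.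
Proof.
move=> p_weq y.
pose true_smap := @SMap (Sing Y) (const_sdata Prop) (fun _ _ => True) (fun _ _ _ _ => erefl).
have [_ weq_inj] := p_weq (const_sset Prop) (@const_kan Prop).
have E : smap_comp (Sing_map p) in_image_smap = smap_comp (Sing_map p) true_smap.
  apply: smap_ext => n s; apply: propositional_extensionality; split=> // _.
  by exists (proj1_sig s ord0).
have htpc_E : htpc (smap_comp (Sing_map p) in_image_smap) (smap_comp (Sing_map p) true_smap).
  by rewrite E; apply: rst_refl.
have := htpc_const_vertex (Y := Sing_sset Y) (weq_inj _ _ htpc_E) (const_hom (Delta 0) y).
by move=> /= img_y; change (in_image (const_hom (Delta 0) y)); rewrite img_y.
Qed.

End FibWeqSurj.

Definition walk (K : cpx) n (g : nat -> vtx K) : Prop :=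
  forall i, i < n -> edge (g i) (g i.+1).

Lemma fib_walk_lift (X Y : cpx) (p : hom X Y) (w : nat -> vtx Y) (x : vtx X) :
  cpx_fib p -> proj1_sig p x = w 0 -> forall n, walk n w ->
  exists g : nat -> vtx X,
    [/\ g 0 = x, forall i, i <= n -> proj1_sig p (g i) = w i & walk n g].
Proof.
move=> p_fib px; elim=> [|n IH] w_walk.
  by exists (fun _ => x); split=> // i; rewrite leqn0 => /eqP ->.
have [g [g0 g_over g_walk]] := IH (fun i lt_in => w_walk i (ltnW lt_in)).
have gn_edge : edge (proj1_sig p (g n)) (w n.+1) by rewrite g_over //; apply: w_walk.
have [a [pa ga]] := fib_edge_lift gn_edge p_fib.
exists (fun i => if i == n.+1 then a else g i); split=> // [i|i lt_in].
  by rewrite leq_eqVlt => /orP [/eqP ->|lt_in]; rewrite ?eqxx // ltn_eqF ?g_over.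
rewrite ltn_eqF //; have [->|ne_in] := eqVneq i n; first by rewrite eqxx.
by rewrite eqSS (negbTE ne_in); apply: g_walk; rewrite ltn_neqAle ne_in -ltnS.
Qed.

Lemma In_simp_adj n (S : 'I_n.+1 -> Prop) (y z : 'I_n.+1) : In_simp S -> S y -> S z ->
  [\/ y = z :> nat, y.+1 = z :> nat | z.+1 = y :> nat].
Proof.
move=> [_ S_adj] Sy Sz; case/or3P: (S_adj y z Sy Sz) => [/eqP -> | /eqP | /eqP];
  by [constructor 1 | constructor 2 | constructor 3].
Qed.

Lemma In_simp_cases n (S : 'I_n.+1 -> Prop) : In_simp S ->
  (exists2 i, i < n & forall z, S z -> z = i :> nat \/ z = i.+1 :> nat) \/
  exists x0, forall z, S z -> z = x0.
Proof.
move=> S_simp; have [[x0 Sx0] _] := S_simp.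
have adj y z := @In_simp_adj n S y z S_simp.
have [[y [Sy yE]]|no_succ] := classic (exists y, S y /\ y = x0.+1 :> nat).
  left; exists (nat_of_ord x0); first by rewrite -ltnS -yE ltn_ord.
  by move=> z Sz; case: (adj z x0 Sz Sx0) => ?; case: (adj z y Sz Sy) => ?; lia.
have [[y [Sy yE]]|no_pred] := classic (exists y, S y /\ y.+1 = x0 :> nat).
  left; exists (nat_of_ord y); first by rewrite -ltnS yE ltn_ord.
  by move=> z Sz; case: (adj z x0 Sz Sx0) => ?; case: (adj z y Sz Sy) => ?; lia.
right; exists x0 => z Sz; case: (adj z x0 Sz Sx0) => [/val_inj //|zE|zE].
  by case: no_pred; exists z.
by case: no_succ; exists z.
Qed.

Lemma walk_pres (X : cpx) n (g : nat -> vtx X) :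
  walk n g -> preserves (K := In n) (L := X) (fun j => g j).
Proof.
move=> g_walk S S_simp; have [[x0 Sx0] _] := S_simp.
case: (In_simp_cases S_simp) => [[i lt_in S_sub] | [y S_y]].
  apply: (simp_sub (g_walk i lt_in)); first by exists (g x0); exists x0.
  by move=> _ [z [Sz <-]]; case: (S_sub z Sz) => ->; [left|right].
apply: (simp_sub (simp_single (g y))); first by exists (g x0); exists x0.
by move=> _ [z [Sz <-]]; rewrite (S_y z Sz).
Qed.

Lemma In_edge n (a b : 'I_n.+1) : a.+1 = b :> nat -> edge (a : vtx (In n)) b.
Proof.
move=> ab; split; first by exists a; left.
by move=> y z [->|->] [->|->]; rewrite ?eqxx //= ab eqxx ?orbT.
Qed.

Lemma fib_path_lift (X Y : cpx) (p : hom X Y) n (v : hom (In n) Y) (x : vtx X) :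
  cpx_fib p -> proj1_sig p x = proj1_sig v ord0 ->
  exists h : hom (In n) X,
    proj1_sig h ord0 = x /\ forall b, proj1_sig p (proj1_sig h b) = proj1_sig v b.
Proof.
move=> p_fib px.
pose w i := proj1_sig v (inord i).
have w_walk : walk n w.
  by move=> i lt_in; apply/hom_edge/In_edge; rewrite !inordK // ltnW.
have w0 : w 0 = proj1_sig v ord0.
  by rewrite /w; congr (proj1_sig v); apply: val_inj; rewrite /= inordK.
have [g [g0 g_over g_walk]] := fib_walk_lift p_fib (etrans px (esym w0)) w_walk.
exists (exist _ _ (walk_pres g_walk)); split=> //= b.
rewrite g_over; last by rewrite -ltnS.
by rewrite /w inord_val.
Qed.

Lemma rev_ord_pres n : preserves (K := In n) (L := In n) (@rev_ord n.+1).
Proof.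
move=> S S_simp; have [[x0 Sx0] _] := S_simp.
split; first by exists (rev_ord x0); exists x0.
move=> _ _ [y [Sy <-]] [z [Sz <-]]; rewrite -!(inj_eq val_inj) /=.
have := ltn_ord y; have := ltn_ord z.
by case: (In_simp_adj S_simp Sy Sz) => E *; apply/or3P;
  [constructor 1 | constructor 3 | constructor 2]; apply/eqP; lia.
Qed.

Definition In_rev n : hom (In n) (In n) := exist _ _ (@rev_ord_pres n).

Lemma llp_endpt0 n (X Y : cpx) (p : hom X Y) : cpx_fib p -> llp (endpt (@ord0 n)) p.
Proof.
move=> p_fib u v uv; have [h [h0 h_over]] := fib_path_lift p_fib (uv tt).
by exists h; split=> // -[].
Qed.

Lemma llp_endpt_max n (X Y : cpx) (p : hom X Y) : cpx_fib p -> llp (endpt (@ord_max n)) p.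
Proof.
move=> p_fib u v uv.
have rev0 : proj1_sig (hom_comp (In_rev n) v) ord0 = proj1_sig v ord_max.
  by congr (proj1_sig v); apply: val_inj; rewrite /= subn1.
have [h [h0 h_over]] := fib_path_lift p_fib (etrans (uv tt) (esym rev0)).
exists (hom_comp (In_rev n) h); split=> [[]|b] /=.
  by rewrite -h0; congr (proj1_sig h); apply: val_inj; rewrite /= subnn.
by rewrite h_over /= rev_ordK.
Qed.

Lemma llp_from_empty_In n (X Y : cpx) (p : hom X Y) :
  cpx_trivfib p -> llp (from_empty (In n)) p.
Proof.
move=> [p_fib p_weq] u v _; have [x px] := weq_fib_surj p_fib p_weq (proj1_sig v ord0).
have [h [_ h_over]] := fib_path_lift p_fib px.
by exists h; split=> // -[].
Qed.

Lemma llp_from_empty_K1 (X Y : cpx) (p : hom X Y) : cpx_trivfib p -> llp (from_empty K1) p.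
Proof.
move=> [p_fib p_weq] u v _; have [x px] := weq_fib_surj p_fib p_weq (proj1_sig v tt).
by exists (const_hom K1 x); split=> // -[].
Qed.

Theorem lemma6p6 :
  forall n : nat, 0 < n ->
    cofibrant (In n) /\ cofibrant K1 /\
    (forall e : 'I_n.+1, e = ord0 \/ e = ord_max -> cofibration (endpt e)).
Proof.
move=> n _; split; last split.
- by move=> X Y p; apply: llp_from_empty_In.
- by move=> X Y p; apply: llp_from_empty_K1.
- by move=> e [->|->] X Y p [p_fib _]; [apply: llp_endpt0 | apply: llp_endpt_max].
Qed.
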